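(* Let $G$ be a graph, $\mathcal{B}$ a set of balls in $G$, $X\subset V(G)$, $\mathcal{H}$ the set of connected components of $G-X$, and $G'$ an induced subgraph of $G$. Suppose $X\subseteq V(G')$ and, for every $H\in\mathcal{H}$, either (1) $V(H)\subseteq V(G')$, or (2) $V(H)\cap V(G')=\emptyset$ and there exist distinct $H',H''$ with $H'\sim_{\mathcal{B}}H$, $H''\sim_{\mathcal{B}}H$ and $V(H')\cup V(H'')\subseteq V(G')$. Then the set $\mathcal{B}'=\{B_r(u)\cap V(G') : B_r(u)\in\mathcal{B},\ u\in V(G')\}$ is a set of balls in $G'$. Moreover, there is a bijection between the balls in $\mathcal{B}'$ and the balls in $\mathcal{B}$ centered in $V(G')$.
   Context: For a graph $G$, $r\ge 0$ and $v\in V(G)$, the ball $B_r(v)$ is the set of vertices at distance at most $r$ from $v$ (its center). Two components $H,H'\in\mathcal{H}$ are twin-blocks with respect to $\mathcal{B}$, written $H\sim_{\mathcal{B}}H'$, if there is an isomorphism $\alpha$ from $H$ to $H'$ such that (i) for each $u\in V(H)$ and $x\in X$, $ux\in E(G)$ iff $\alpha(u)x\in E(G)$, and (ii) for each $u\in V(H)$ and $r\in\mathbb{N}$, $B_r(u)\in\mathcal{B}$ iff $B_r(\alpha(u))\in\mathcal{B}$. *)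

From mathcomp Require Import all_boot.
Set Implicit Arguments. Unset Strict Implicit. Unset Printing Implicit Defensive.

Section Graphs.
Variable T : finType.

Definition simple_graph (e : rel T) : Prop := symmetric e /\ irreflexive e.

(* Ball of radius r around v in the subgraph of (T, e) induced by S:
   the vertices of S reachable from v by a walk of length <= r inside S.
   (Empty if v \notin S; we only use it with v \in S.) *)
Fixpoint ball (S : {set T}) (e : rel T) (r : nat) (v : T) : {set T} :=
  match r with
  | 0 => [set v] :&: S
  | r'.+1 => ball S e r' v :|: [set y in S | [exists x in ball S e r' v, e x y]]
  end.

Definition ballG (e : rel T) (r : nat) (v : T) : {set T} := ball setT e r v.

Definition is_ball_in (S : {set T}) (e : rel T) (beta : {set T}) : Prop :=
  exists u r, u \in S /\ beta = ball S e r u.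

Definition edge_minus (X : {set T}) (e : rel T) : rel T :=
  fun a b => [&& e a b, a \notin X & b \notin X].

Definition component (e : rel T) (X C : {set T}) : Prop :=
  exists x, x \notin X /\ C = [set y | connect (edge_minus X e) x y].

Definition twin (e : rel T) (X : {set T}) (B : {set {set T}}) (H H' : {set T}) : Prop :=
  exists alpha : T -> T,
    [/\ {in H &, injective alpha},
        alpha @: H = H',
        (forall u v, u \in H -> v \in H -> e (alpha u) (alpha v) = e u v),
        (forall u x, u \in H -> x \in X -> e u x = e (alpha u) x) &
        (forall u r, u \in H -> (ballG e r u \in B) = (ballG e r (alpha u) \in B))].

End Graphs.

(* Write S for V(G').  Every vertex outside S lies in a component H of G - X
   that misses S and has a twin H' inside S.  Since H is attached to the rest
   of G only through X, mapping H onto H' along the twin isomorphism and fixing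
   all other vertices is a graph homomorphism; gluing these maps over all such
   components gives a homomorphic retraction of G onto G[S].  Homomorphisms do
   not increase distances, so B_r(u) and the ball of G[S] agree on S when u is
   in S.  For injectivity of beta |-> beta :&: S, let two balls centered in S
   agree on S and take v outside S in the first one.  One of the two distinct
   twins of the component of v avoids the second center; push v into that
   twin, where the balls agree, and pull it back by the inverse homomorphism. *)
From mathcomp Require Import all_boot.
From Stdlib Require Import Classical ClassicalEpsilon.

Set Implicit Arguments. Unset Strict Implicit. Unset Printing Implicit Defensive.

Section Balls.
Variables (T : finType) (e : rel T).

Lemma ball_sub (S : {set T}) r u : ball S e r u \subset S.
Proof.
elim: r => [|r IH] /=; first exact: subsetIr.
by rewrite subUset IH; apply/subsetP => y; rewrite inE => /andP [].
Qed.

Lemma mem_ball_homo (g : T -> T) (S S' : {set T}) r u v :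
  {in S &, {homo g : a b / e a b}} -> {in S, forall w, g w \in S'} ->
  v \in ball S e r u -> g v \in ball S' e r (g u).
Proof.
move=> g_homo gS; elim: r v => [|r IH] v /=.
  by rewrite !inE => /andP [/eqP -> uS]; rewrite eqxx gS.
rewrite !inE => /orP [/IH -> //|/andP [vS /existsP [x /andP [xB exv]]]].
have xS : x \in S := subsetP (ball_sub S r u) x xB.
by rewrite gS //=; apply/orP; right; apply/existsP; exists (g x); rewrite IH ?g_homo.
Qed.

Lemma mem_ballG_homo (g : T -> T) r u v :
  {homo g : a b / e a b} -> v \in ballG e r u -> g v \in ballG e r (g u).
Proof. by move=> g_homo; apply: mem_ball_homo => // a b _ _; apply: g_homo. Qed.

Lemma ballG_retract (S : {set T}) (g : T -> T) r u :
  {homo g : a b / e a b} -> (forall w, g w \in S) -> {in S, forall w, g w = w} ->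
  u \in S -> ballG e r u :&: S = ball S e r u.
Proof.
move=> g_homo gS g_id uS; apply/setP => v; rewrite inE.
apply/andP/idP => [[vB vS] | vB].
  rewrite -(g_id v vS) -(g_id u uS).
  by apply: mem_ball_homo vB => // a b _ _; apply: g_homo.
split; last exact: subsetP (ball_sub S r u) v vB.
by apply: (mem_ball_homo (g := id)) vB => // w; rewrite inE.
Qed.

Lemma ballG_transfer (S : {set T}) (F1 F2 : T -> T) r1 r2 u1 u2 v :
  ballG e r1 u1 :&: S \subset ballG e r2 u2 -> v \in ballG e r1 u1 ->
  {homo F1 : a b / e a b} -> {homo F2 : a b / e a b} ->
  F1 u1 = u1 -> F2 u2 = u2 -> F1 v \in S -> F2 (F1 v) = v ->
  v \in ballG e r2 u2.
Proof.
move=> B12 vB F1_homo F2_homo F1u1 F2u2 F1vS F21v.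
have F1vB : F1 v \in ballG e r1 u1 by rewrite -F1u1 mem_ballG_homo.
rewrite -F21v -F2u2 mem_ballG_homo //.
by apply: (subsetP B12); rewrite inE F1vB.
Qed.

End Balls.

Section Blocks.
Variables (T : finType) (e : rel T) (X : {set T}).
Hypothesis e_sym : symmetric e.

Definition component_of (w : T) : {set T} := [set y | connect (edge_minus X e) w y].

Lemma edge_minus_connect_sym : connect_sym (edge_minus X e).
Proof.
apply: sym_connect_sym => a b; rewrite /edge_minus e_sym.
by case: (a \in X); case: (b \in X); rewrite ?andbF ?andbT.
Qed.

Lemma mem_component_of w : w \in component_of w.
Proof. by rewrite inE connect0. Qed.

Lemma component_of_trans v w : v \in component_of w -> component_of v = component_of w.
Proof.
rewrite inE => wv; apply/setP => y; rewrite !inE.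
by rewrite (same_connect edge_minus_connect_sym wv).
Qed.

Lemma component_of_component w : w \notin X -> component e X (component_of w).
Proof. by exists w. Qed.

Lemma componentE H w : component e X H -> w \in H -> H = component_of w.
Proof. by move=> [x [_ ->]] wH; rewrite (component_of_trans wH). Qed.

Lemma component_eq H1 H2 w :
  component e X H1 -> component e X H2 -> w \in H1 -> w \in H2 -> H1 = H2.
Proof. by move=> cH1 cH2 wH1 wH2; rewrite (componentE cH1 wH1) (componentE cH2 wH2). Qed.

Lemma component_notin H w : component e X H -> w \in H -> w \notin X.
Proof.
move=> [x [xX ->]]; rewrite inE => /connectP [p + ->] {w}.
elim: p x xX => [|z p IH] x xX //= /andP [xz]; apply: IH.
by case/and3P: xz.
Qed.

Lemma component_edge H a b : component e X H -> a \in H -> e a b -> (b \in H) || (b \in X).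
Proof.
move=> cH aH eab; case: (boolP (b \in X)) => bX; rewrite ?orbT // orbF.
have aX := component_notin cH aH.
rewrite (componentE cH aH) inE; apply: connect1.
by rewrite /edge_minus eab aX.
Qed.

Definition patch (M : {set T}) (phi : T -> T) (w : T) := if w \in M then phi w else w.

Lemma patch_homo (M : {set T}) (phi : T -> T) :
  (forall a b, a \in M -> b \notin M -> e a b -> b \in X) ->
  {in M &, {homo phi : a b / e a b}} ->
  (forall a x, a \in M -> x \in X -> e a x -> e (phi a) x) ->
  {homo patch M phi : a b / e a b}.
Proof.
move=> outX in_homo X_homo a b eab; rewrite /patch.
case: ifP => aM; case: ifP => bM //.
- exact: in_homo.
- by apply: X_homo => //; apply: (outX a); rewrite ?bM.
- rewrite e_sym; rewrite e_sym in eab.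
  by apply: X_homo => //; apply: (outX b); rewrite ?aM.
Qed.

(* The twin-block isomorphism K -> H, minus bijectivity and condition (ii). *)
Definition twin_map (K H : {set T}) (phi : T -> T) :=
  [/\ {in K, forall a, phi a \in H},
      {in K &, forall a b, e (phi a) (phi b) = e a b} &
      {in K, forall a x, x \in X -> e (phi a) x = e a x}].

Lemma twin_map_sub (K H H' : {set T}) (phi : T -> T) :
  H \subset H' -> twin_map K H phi -> twin_map K H' phi.
Proof. by move=> /subsetP HH' [phiH phi_e phi_X]; split=> // a /phiH /HH'. Qed.

Lemma component_patch_homo (K H : {set T}) (phi : T -> T) :
  component e X K -> twin_map K H phi -> {homo patch K phi : a b / e a b}.
Proof.
move=> cK [_ phi_e phi_X]; apply: patch_homo.
- by move=> a b aK /negbTE bK eab; move: (component_edge cK aK eab); rewrite bK.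
- by move=> a b aK bK; rewrite phi_e.
- by move=> a x aK xX; rewrite phi_X.
Qed.

Lemma twin_maps (B : {set {set T}}) (K H : {set T}) : twin e X B K H ->
  exists al be, [/\ twin_map K H al, twin_map H K be & {in H, cancel be al}].
Proof.
move=> [al [_ al_im al_e al_X _]].
pose be a := odflt a [pick k in K | al k == a].
have beP a : a \in H -> be a \in K /\ al (be a) = a.
  rewrite -al_im => /imsetP [k kK ->]; rewrite /be.
  case: pickP => [k' /andP [k'K /eqP ->] // | /(_ k)].
  by rewrite kK eqxx.
exists al, be; split.
- split=> [a aK | a c aK cK | a aK x xX]; first by rewrite -al_im imset_f.
    exact: al_e.
  by rewrite -al_X.
- split=> [a /beP [] | a c /beP [aK ea] /beP [cK ec] | a /beP [aK ea] x xX] //.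
    by rewrite -al_e // ea ec.
  by rewrite al_X // ea.
- by move=> a /beP [].
Qed.

End Blocks.

Section Retraction.
Variables (T : finType) (e : rel T) (B : {set {set T}}) (X S : {set T}).
Hypothesis e_sym : symmetric e.
Hypothesis X_sub_S : X \subset S.
Hypothesis twin_cover : forall H, component e X H ->
  H \subset S \/
  (H :&: S = set0 /\
   exists H' H'', [/\ component e X H', component e X H'', H' <> H'',
                      twin e X B H' H /\ twin e X B H'' H & H' :|: H'' \subset S]).

Lemma notin_S_notin_X w : w \notin S -> w \notin X.
Proof. by apply: contra; apply: subsetP. Qed.

Lemma outside_component w : w \notin S ->
  component_of e X w :&: S = set0 /\
  exists H' H'', [/\ component e X H', component e X H'', H' <> H'',
                     twin e X B H' (component_of e X w) /\ twin e X B H'' (component_of e X w)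
                   & H' :|: H'' \subset S].
Proof.
move=> wS; have cw := component_of_component e (notin_S_notin_X wS).
case: (twin_cover cw) => // /subsetP /(_ w).
by rewrite mem_component_of (negbTE wS) => /(_ isT).
Qed.

Lemma component_of_outside w v : w \notin S -> v \in component_of e X w -> v \notin S.
Proof.
move=> /outside_component [/setP /(_ v) + _] vH.
by rewrite in_setI in_set0 vH => /negbT.
Qed.

Lemma exists_outside_twin_maps : exists Phi : {set T} -> T -> T,
  forall w, w \notin S -> twin_map e X (component_of e X w) S (Phi (component_of e X w)).
Proof.
pose fits C phi := forall w, w \notin S -> C = component_of e X w -> twin_map e X C S phi.
suff [Phi PhiP] : exists Phi, forall C, fits C (Phi C).
  by exists Phi => w wS; apply: (PhiP _ w wS).
apply: ClassicalEpsilon.choice => C.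
case: (classic (exists2 w, w \notin S & C = component_of e X w)) => [[w wS ->]|none].
  have [_ [H' [H'' [_ _ _ [twH' _] sub]]]] := outside_component wS.
  have [_ [be [_ tbe _]]] := twin_maps twH'.
  exists be => _ _ _; apply: twin_map_sub tbe.
  by apply: subset_trans sub; apply: subsetUl.
by exists id => w wS CE; case: none; exists w.
Qed.

Lemma exists_retraction : exists g : T -> T,
  [/\ {homo g : a b / e a b}, forall w, g w \in S & {in S, forall w, g w = w}].
Proof.
have [Phi PhiP] := exists_outside_twin_maps.
have adj a b : a \notin S -> e a b -> (b \in component_of e X a) || (b \in X).
  move=> aS; apply: (component_edge e_sym) (mem_component_of e X a).
  exact: component_of_component (notin_S_notin_X aS).
exists (patch (~: S) (fun w => Phi (component_of e X w) w)); split.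
- apply: (patch_homo (X := X) e_sym) => [a b | a b | a x]; rewrite !inE.
  + move=> aS /negPn bS /(adj a b aS) /orP [/(component_of_outside aS)|//].
    by rewrite bS.
  + move=> aS bS eab; have bH : b \in component_of e X a.
      by have := adj a b aS eab; rewrite (negbTE (notin_S_notin_X bS)) orbF.
    rewrite (component_of_trans e_sym bH).
    by have [_ -> //] := PhiP a aS; apply: mem_component_of.
  + by move=> aS xX eax; have [_ _ ->] := PhiP a aS; rewrite ?mem_component_of.
- move=> w; rewrite /patch inE; case: (boolP (w \in S)) => //= wS.
  by have [-> //] := PhiP w wS; apply: mem_component_of.
- by move=> w wS; rewrite /patch inE wS.
Qed.

Lemma ballG_inter r u : u \in S -> ballG e r u :&: S = ball S e r u.
Proof. by have [g [g_homo gS g_id]] := exists_retraction; exact: ballG_retract g_homo gS g_id. Qed.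

Lemma ballG_inter_sub r1 r2 u1 u2 : u1 \in S -> u2 \in S ->
  ballG e r1 u1 :&: S = ballG e r2 u2 :&: S -> ballG e r1 u1 \subset ballG e r2 u2.
Proof.
move=> u1S u2S E; apply/subsetP => v vB.
have B12 : ballG e r1 u1 :&: S \subset ballG e r2 u2 by rewrite E subsetIl.
case: (boolP (v \in S)) => vS; first by apply: (subsetP B12); rewrite inE vB vS.
have [_ [H' [H'' [cH' cH'' neq [tw' tw''] sub]]]] := outside_component vS.
have [K [cK twK KS u2K]] : exists K, [/\ component e X K, twin e X B K (component_of e X v),
                                        K \subset S & u2 \notin K].
  have [u2H'|u2H'] := boolP (u2 \in H').
    exists H''; split=> //; first by apply: subset_trans sub; apply: subsetUr.
    by apply/negP => u2H''; apply: neq; apply: (component_eq e_sym cH' cH'' u2H' u2H'').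
  by exists H'; split=> //; apply: subset_trans sub; apply: subsetUl.
have [al [be [tal tbe beK]]] := twin_maps twK.
have vH := mem_component_of e X v.
have beK_v : be v \in K by case: tbe => + _ _; apply.
apply: (ballG_transfer (F1 := patch (component_of e X v) be) (F2 := patch K al) B12 vB).
- exact: (component_patch_homo e_sym) (component_of_component e (notin_S_notin_X vS)) tbe.
- exact: (component_patch_homo e_sym) cK tal.
- by rewrite /patch ifN //; apply: contraL u1S; apply: component_of_outside.
- by rewrite /patch (negbTE u2K).
- by rewrite /patch vH (subsetP KS).
- by rewrite /patch vH beK_v beK.
Qed.

Lemma ballG_inter_inj r1 r2 u1 u2 : u1 \in S -> u2 \in S ->
  ballG e r1 u1 :&: S = ballG e r2 u2 :&: S -> ballG e r1 u1 = ballG e r2 u2.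
Proof.
move=> u1S u2S E; apply/eqP; rewrite eqEsubset.
by rewrite !ballG_inter_sub.
Qed.

End Retraction.

Theorem lemma22 (T : finType) (e : rel T) (B : {set {set T}}) (X S : {set T}) :
  simple_graph e ->
  (forall beta, beta \in B -> is_ball_in setT e beta) ->
  X \subset S ->
  (forall H, component e X H ->
     H \subset S \/
     (H :&: S = set0 /\
      exists H' H'', [/\ component e X H', component e X H'', H' <> H'',
                         twin e X B H' H /\ twin e X B H'' H & H' :|: H'' \subset S])) ->
  let B' := fun beta' : {set T} =>
    exists beta u r, [/\ beta \in B, u \in S, beta = ballG e r u & beta' = beta :&: S] in
  let Bc := fun beta : {set T} =>
    beta \in B /\ exists u r, u \in S /\ beta = ballG e r u in
  (forall beta', B' beta' -> is_ball_in S e beta') /\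
  exists f : {set T} -> {set T},
    [/\ (forall beta, Bc beta -> B' (f beta)),
        (forall b1 b2, Bc b1 -> Bc b2 -> f b1 = f b2 -> b1 = b2) &
        (forall beta', B' beta' -> exists beta, Bc beta /\ f beta = beta')].
Proof.
move=> [e_sym _] _ X_sub_S twin_cover B' Bc; split.
  move=> _ [_ [u [r [_ uS -> ->]]]]; exists u, r; split=> //.
  exact: (ballG_inter e_sym X_sub_S twin_cover).
exists (fun beta => beta :&: S); split.
- by move=> beta [bB [u [r [uS bE]]]]; exists beta, u, r.
- move=> _ _ [_ [u1 [r1 [u1S ->]]]] [_ [u2 [r2 [u2S ->]]]].
  exact: (ballG_inter_inj e_sym X_sub_S twin_cover).
- move=> _ [beta [u [r [bB uS bE ->]]]]; exists beta; split=> //.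
  by split=> //; exists u, r.
Qed.
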